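(* Let $\alpha>1$, $r=\frac12(1-\frac1\alpha)$, let $a,b$ be positive integers with $s=a+b\ge2$, and let $n'_*=\lfloor -\log_r (s-1)\rfloor+1$. Then for every positive even integer $k$ with \[ k\ \ge\ \max\Bigg\{\left\lceil 2\,\frac{(1-r+r^{n'_*})^{s-2}\,[\,(1-r+r^{n'_*})+(s-1)\,]}{(1-r)^{s-2}\,[\,(1-r)+(s-1)(1-r^{n'_*})\,]}+2\right\rceil\Big(\frac{1-r}{r}\Big)^{s-1},\ \ 2\Big(\frac{1-r}{r}\Big)^{s},\ \ 2\Big(\frac1{1-r}\Big)^{s-1}+2\Bigg\}, \] we have \[ \Big[0,\tfrac k2\Big]=\{x_1^ax_2^b+x_3^ax_4^b+\cdots+x_{k-1}^ax_k^b:\ x_1,\dots,x_k\in C_\alpha\}. \]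
   Context: For real $\alpha>1$ let $r=\frac12(1-\frac1\alpha)\in(0,\frac12)$. Define $f_0,f_1:[0,1]\to[0,1]$ by $f_0(x)=rx$, $f_1(x)=rx+1-r$; for $\omega=\sigma_1\cdots\sigma_n\in\{0,1\}^n$ let $f_\omega=f_{\sigma_1}\circ\cdots\circ f_{\sigma_n}$. Let $F_n=\{f_\omega([0,1]):\omega\in\{0,1\}^n\}$ (the level-$n$ basic intervals, each of length $r^n$), $C_n=\bigcup_{I\in F_n}I$, and $C_\alpha=\bigcap_{n\ge1}C_n$ (the middle-$\frac1\alpha$ Cantor set; $C_3$ is the ternary Cantor set). *)

From Stdlib Require Import Reals Lra Lia ZArith List.
Open Scope R_scope.

Definition ratio (alpha : R) : R := (1 - 1 / alpha) / 2.

Definition f0 (r x : R) : R := r * x.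
Definition f1 (r x : R) : R := r * x + 1 - r.

Fixpoint f_word (r : R) (w : list bool) (x : R) : R :=
  match w with
  | nil => x
  | b :: w' => (if b then f1 r else f0 r) (f_word r w' x)
  end.

Definition in_basic (r : R) (w : list bool) (x : R) : Prop :=
  exists y, 0 <= y <= 1 /\ x = f_word r w y.

Definition C_level (r : R) (n : nat) (x : R) : Prop :=
  exists w : list bool, length w = n /\ in_basic r w x.

Definition Cantor (alpha : R) (x : R) : Prop :=
  forall n : nat, (1 <= n)%nat -> C_level (ratio alpha) n x.

(* floor and ceiling (Int_part x = up x - 1 is the floor) *)
Definition Rfloor (x : R) : Z := (up x - 1)%Z.
Definition Rceil (x : R) : Z := (- Rfloor (- x))%Z.

Definition logb (r y : R) : R := ln y / ln r.

(* x_1^a x_2^b + x_3^a x_4^b + ... over m pairs (0-indexed: x 0, x 1, ...) *)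
Fixpoint pair_sum (x : nat -> R) (a b m : nat) : R :=
  match m with
  | O => 0
  | S m' => pair_sum x a b m' + x (2 * m')%nat ^ a * x (2 * m' + 1)%nat ^ b
  end.

(* Putting 1 in every second coordinate reduces the claim to writing each y in [0, k/2] as a sum of
   k/2 powers u_i^e with u_i in C_alpha, where e = min(a, b), so that 2e <= s.  Such sums come from a
   simultaneous bisection: for p cylinders I_i the sums of e-th powers of points c_i in I_i fill the
   interval between the sums over left and over right endpoints, and splitting one cylinder into its
   two children keeps y inside the new interval as long as the image of the removed middle gap, at
   most e(1-2r)|I_j|, is covered by the images of the other cylinders, each at least
   e lo^(e-1) r |I_j|.  Iterating gives nested cylinders whose limit points represent y.  Started from
   the cylinder [1-r, 1] this fills every band [p(1-r)^e, p] with p large enough, the bands for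
   p <= k/2 fill (r^e k/2, k/2], and the self-similarity x |-> r x of C_alpha fills the rest; the
   hypotheses on k provide the room this needs.  For e = 1 one starts from [0, 1] directly. *)

From Stdlib Require Import Reals ZArith Lra Lia List ClassicalEpsilon ChoiceFacts.
Open Scope R_scope.

Fixpoint ssum (f : nat -> R) (p : nat) : R :=
  match p with O => 0 | S p' => ssum f p' + f p' end.

Lemma ssum_ext f g p : (forall i, (i < p)%nat -> f i = g i) -> ssum f p = ssum g p.
Proof.
  induction p as [|p IH]; intros H; simpl; [reflexivity|].
  rewrite IH, H; auto.
Qed.

Lemma ssum_le f g p : (forall i, (i < p)%nat -> f i <= g i) -> ssum f p <= ssum g p.
Proof.
  induction p as [|p IH]; intros H; simpl; [lra|].
  apply Rplus_le_compat; auto.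
Qed.

Lemma ssum_sub f g p : ssum g p - ssum f p = ssum (fun i => g i - f i) p.
Proof. induction p as [|p IH]; simpl; [ring|]. rewrite <- IH. ring. Qed.

Lemma ssum_const c p : ssum (fun _ => c) p = INR p * c.
Proof. induction p as [|p IH]; simpl ssum; [simpl; ring|]. rewrite IH, S_INR. ring. Qed.

Lemma ssum_scale c f p : ssum (fun i => c * f i) p = c * ssum f p.
Proof. induction p as [|p IH]; simpl; [ring|]. rewrite IH. ring. Qed.

Lemma ssum_zero_tail f p m : (p <= m)%nat -> (forall i, (p <= i)%nat -> f i = 0) ->
  ssum f m = ssum f p.
Proof.
  intros Hpm H. induction m as [|m IH]; [replace p with 0%nat by lia; reflexivity|].
  destruct (Nat.eq_dec p (S m)) as [->|Hne]; [reflexivity|].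
  simpl. rewrite IH, (H m) by lia. ring.
Qed.

Lemma ssum_ge_term f p0 j mu : (j < S p0)%nat -> (forall i, (i < S p0)%nat -> mu <= f i) ->
  f j + INR p0 * mu <= ssum f (S p0).
Proof.
  revert j. induction p0 as [|p0 IH]; intros j Hj H.
  - simpl. replace j with 0%nat by lia. lra.
  - change (ssum f (S (S p0))) with (ssum f (S p0) + f (S p0)). rewrite S_INR.
    destruct (Nat.eq_dec j (S p0)) as [->|Hne].
    + pose proof (ssum_le (fun _ => mu) f (S p0) ltac:(intros; apply H; lia)) as Hle.
      rewrite ssum_const, S_INR in Hle. lra.
    + pose proof (IH j ltac:(lia) ltac:(intros; apply H; lia)). pose proof (H (S p0) ltac:(lia)). lra.
Qed.

Definition upd {A} (W : nat -> A) (j : nat) (v : A) : nat -> A :=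
  fun i => if Nat.eqb i j then v else W i.

Lemma ssum_upd {A} (F : A -> R) (W : nat -> A) j v p : (j < p)%nat ->
  ssum (fun i => F (upd W j v i)) p = ssum (fun i => F (W i)) p - F (W j) + F v.
Proof.
  induction p as [|p IH]; intros Hj; [lia|]. simpl. unfold upd at 2.
  destruct (Nat.eqb_spec p j) as [->|Hne].
  - rewrite (ssum_ext _ (fun i => F (W i)) j); [ring|].
    intros i Hi. unfold upd. destruct (Nat.eqb_spec i j); [lia|reflexivity].
  - rewrite IH by lia. ring.
Qed.

Lemma pow_le_one x n : 0 <= x <= 1 -> x ^ n <= 1.
Proof. intro H. rewrite <- (pow1 n). apply pow_incr; lra. Qed.

Lemma pow_le_pow_of_le1 x n m : 0 <= x <= 1 -> (n <= m)%nat -> x ^ m <= x ^ n.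
Proof.
  intros Hx Hnm. replace m with (n + (m - n))%nat by lia. rewrite pow_add.
  pose proof (pow_le x n ltac:(lra)). pose proof (pow_le_one x (m - n) Hx).
  pose proof (pow_le x (m - n) ltac:(lra)). nra.
Qed.

Lemma pow_lt_pow_base x y n : 0 <= x < y -> x ^ S n < y ^ S n.
Proof.
  intro H. induction n as [|n IH]; [simpl; lra|].
  change (x * x ^ S n < y * y ^ S n). pose proof (pow_le x (S n) ltac:(lra)). nra.
Qed.

Lemma pow_sub_le e x y : 0 <= y <= x -> x <= 1 -> x ^ S e - y ^ S e <= INR (S e) * (x - y).
Proof.
  intros Hy Hx. induction e as [|e IH]; [simpl; lra|].
  replace (x ^ S (S e) - y ^ S (S e)) with (x * (x ^ S e - y ^ S e) + y ^ S e * (x - y)) by (simpl; ring).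
  rewrite (S_INR (S e)).
  pose proof (pow_incr y x (S e) Hy). pose proof (pow_le_one y (S e) ltac:(lra)).
  pose proof (pow_le y (S e) ltac:(lra)). nra.
Qed.

Lemma pow_sub_ge e lo x y : 0 <= lo <= y -> y <= x ->
  INR (S e) * lo ^ e * (x - y) <= x ^ S e - y ^ S e.
Proof.
  intros Hy Hx. induction e as [|e IH]; [simpl; lra|].
  replace (x ^ S (S e) - y ^ S (S e)) with (x * (x ^ S e - y ^ S e) + y ^ S e * (x - y)) by (simpl; ring).
  rewrite (S_INR (S e)).
  assert (lo ^ S e <= y ^ S e) by (apply pow_incr; lra).
  pose proof (pow_le lo e ltac:(lra)). pose proof (pos_INR (S e)).
  assert (INR (S e) * lo ^ e * (x - y) * lo <= INR (S e) * lo ^ e * (x - y) * x)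
    by (apply Rmult_le_compat_l; [apply Rmult_le_pos; [apply Rmult_le_pos|]|]; lra).
  simpl (lo ^ S e) in *. nra.
Qed.

Lemma eq_of_geometric_bound d C q : 0 <= q < 1 -> (forall n, Rabs d <= C * q ^ n) -> d = 0.
Proof.
  intros Hq H. destruct (Req_dec d 0) as [|Hd]; [assumption|exfalso].
  assert (Hpos : 0 < Rabs d) by (apply Rabs_pos_lt; auto).
  assert (HC : 0 <= C) by (specialize (H 0%nat); simpl in H; lra).
  destruct (pow_lt_1_zero q ltac:(rewrite Rabs_right; lra) (Rabs d / (C + 1))) as [N HN];
    [apply Rdiv_lt_0_compat; lra|].
  specialize (HN N (Nat.le_refl N)). rewrite Rabs_right in HN by (apply Rle_ge, pow_le; lra).
  specialize (H N). pose proof (pow_le q N ltac:(lra)).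
  apply (Rmult_lt_compat_l (C + 1)) in HN; [|lra].
  replace ((C + 1) * (Rabs d / (C + 1))) with (Rabs d) in HN by (field; lra). lra.
Qed.

Lemma geometric_scale_exists q M y : 0 < q < 1 -> 0 < y <= M ->
  exists n, q ^ S n * M < y <= q ^ n * M.
Proof.
  intros Hq Hy.
  destruct (pow_lt_1_zero q ltac:(rewrite Rabs_right; lra) (y / M)) as [N HN];
    [apply Rdiv_lt_0_compat; lra|].
  specialize (HN N (Nat.le_refl N)). rewrite Rabs_right in HN by (apply Rle_ge, pow_le; lra).
  assert (HNy : q ^ N * M < y).
  { apply (Rmult_lt_compat_r M) in HN; [|lra].
    unfold Rdiv in HN. rewrite Rmult_assoc, Rinv_l in HN by lra. lra. }
  clear HN. induction N as [|N IH]; [simpl in HNy; lra|].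
  destruct (Rle_or_lt y (q ^ N * M)) as [H|H]; [exists N; split; assumption|auto].
Qed.

Lemma nat_band_cover c Y P m : (forall q, (P <= q)%nat -> (INR q + 1) * c <= INR q) ->
  INR P * c <= Y <= INR m -> (P <= m)%nat ->
  exists p, (P <= p <= m)%nat /\ INR p * c <= Y <= INR p.
Proof.
  intros Hstep HY Hm.
  assert (Hd : forall d, Y <= INR (P + d) -> exists p, (P <= p <= P + d)%nat /\ INR p * c <= Y <= INR p).
  { induction d as [|d IH]; intros Hd.
    - exists P. rewrite Nat.add_0_r in Hd. split; [lia|lra].
    - destruct (Rle_or_lt (INR (P + S d) * c) Y) as [H|H].
      + exists (P + S d)%nat. split; [lia|lra].
      + destruct IH as [p [Hp1 Hp2]].
        * specialize (Hstep (P + d)%nat ltac:(lia)). rewrite Nat.add_succ_r, S_INR in H. lra.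
        * exists p. split; [lia|lra]. }
  destruct (Hd (m - P)%nat) as [p Hp]; [replace (P + (m - P))%nat with m by lia; lra|].
  exists p. split; [lia|apply Hp].
Qed.

Lemma nested_intervals_point (l h : nat -> R) : (forall n m, l n <= l m + h m) ->
  exists x, forall n, l n <= x <= l n + h n.
Proof.
  intro Hnest.
  destruct (completeness (fun z => exists n, z = l n)) as [x [Hub Hlub]].
  - exists (l 0%nat + h 0%nat). intros z [n ->]. apply Hnest.
  - exists (l 0%nat). exists 0%nat. reflexivity.
  - exists x. intro n. split.
    + apply Hub. exists n. reflexivity.
    + apply Hlub. intros z [m ->]. apply Hnest.
Qed.

Lemma exists_nat_ceil x : 0 <= x -> exists n, x <= INR n <= x + 1.
Proof.
  intro Hx. destruct (archimed x) as [H1 H2].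
  assert (Hup : (0 <= up x)%Z) by (apply le_IZR; lra).
  exists (Z.to_nat (up x)). rewrite INR_IZR_INZ, Z2Nat.id by assumption. lra.
Qed.

Section Cylinders.

Variable r : R.
Hypothesis r_bounds : 0 < r < 1.

Definition left_point (w : list bool) : R := f_word r w 0.

Lemma f_word_affine w y : f_word r w y = left_point w + r ^ length w * y.
Proof.
  unfold left_point. induction w as [|b w IH]; simpl; [ring|].
  rewrite IH. destruct b; unfold f0, f1; ring.
Qed.

Lemma f_word_app w v y : f_word r (w ++ v) y = f_word r w (f_word r v y).
Proof. induction w as [|b w IH]; simpl; [reflexivity|]. now rewrite IH. Qed.

Lemma f_word_unit w y : 0 <= y <= 1 -> 0 <= f_word r w y <= 1.
Proof.
  intro Hy. induction w as [|b w IH]; simpl; [assumption|].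
  destruct b; unfold f0, f1; split; nra.
Qed.

Lemma left_point_bounds w : 0 <= left_point w /\ left_point w + r ^ length w <= 1.
Proof.
  split; [apply f_word_unit; lra|].
  pose proof (f_word_unit w 1 ltac:(lra)) as H. rewrite f_word_affine in H. lra.
Qed.

Lemma left_point_app w v :
  left_point w <= left_point (w ++ v) /\
  left_point (w ++ v) + r ^ length (w ++ v) <= left_point w + r ^ length w.
Proof.
  destruct (left_point_bounds v) as [Hv0 Hv1].
  pose proof (pow_lt r (length w) ltac:(lra)).
  pose proof (f_word_affine (w ++ v) 0) as E0. pose proof (f_word_affine (w ++ v) 1) as E1.
  rewrite f_word_app, f_word_affine, (f_word_affine v) in E0, E1.
  split; nra.
Qed.

Lemma left_point_snoc w b :
  left_point (w ++ b :: nil) = left_point w + r ^ length w * (if b then 1 - r else 0).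
Proof. unfold left_point at 1. rewrite f_word_app, f_word_affine. destruct b; simpl; unfold f0, f1; ring. Qed.

Lemma snoc_chain_point (g : nat -> list bool) : (forall n, exists b, g (S n) = g n ++ b :: nil) ->
  exists x, forall n, (n <= length (g n))%nat /\
    left_point (g n) <= x <= left_point (g n) + r ^ length (g n).
Proof.
  intro Hg.
  assert (Hlen : forall n, length (g n) = (length (g 0%nat) + n)%nat).
  { induction n as [|n IH]; [lia|]. destruct (Hg n) as [b ->]. rewrite length_app, IH. simpl. lia. }
  assert (Hpre : forall n d, exists v, g (n + d)%nat = g n ++ v).
  { intros n d. induction d as [|d [v Hv]]; [exists nil; now rewrite Nat.add_0_r, app_nil_r|].
    destruct (Hg (n + d)%nat) as [b Hb]. exists (v ++ b :: nil).
    rewrite Nat.add_succ_r, Hb, Hv, app_assoc. reflexivity. }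
  destruct (nested_intervals_point (fun n => left_point (g n)) (fun n => r ^ length (g n))) as [x Hx].
  - intros n m. cbv beta.
    destruct (Nat.le_ge_cases n m) as [Hnm|Hnm].
    + destruct (Hpre n (m - n)%nat) as [v Hv]. replace (n + (m - n))%nat with m in Hv by lia.
      rewrite Hv. pose proof (left_point_app (g n) v).
      pose proof (pow_le r (length (g n ++ v)) ltac:(lra)). lra.
    + destruct (Hpre m (n - m)%nat) as [v Hv]. replace (m + (n - m))%nat with n in Hv by lia.
      rewrite Hv. pose proof (left_point_app (g m) v).
      pose proof (pow_le r (length (g m ++ v)) ltac:(lra)). lra.
  - exists x. intro n. split; [rewrite Hlen; lia|apply Hx].
Qed.

Definition in_cantor (x : R) : Prop := forall n, C_level r n x.

Lemma C_level_unit n x : C_level r n x -> 0 <= x <= 1.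
Proof. intros [w [_ [y [Hy ->]]]]. now apply f_word_unit. Qed.

Lemma in_cantor_of_nested x (W : nat -> list bool) :
  (forall n, (n <= length (W n))%nat /\ left_point (W n) <= x <= left_point (W n) + r ^ length (W n)) ->
  in_cantor x.
Proof.
  intros HW n. destruct (HW n) as [Hlen Hx].
  pose proof (pow_lt r (length (W n)) ltac:(lra)).
  exists (firstn n (W n)). split; [rewrite length_firstn; lia|].
  exists (f_word r (skipn n (W n)) ((x - left_point (W n)) / r ^ length (W n))). split.
  - apply f_word_unit. split.
    + apply Rmult_le_pos; [lra|]. left; apply Rinv_0_lt_compat; lra.
    + apply (Rmult_le_reg_r (r ^ length (W n))); [lra|].
      unfold Rdiv. rewrite Rmult_assoc, Rinv_l by lra. lra.
  - rewrite <- f_word_app, firstn_skipn, f_word_affine. field. lra.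
Qed.

Lemma in_cantor_0 : in_cantor 0.
Proof.
  intro n. exists (repeat false n). split; [apply repeat_length|]. exists 0. split; [lra|].
  induction n as [|n IH]; simpl; [reflexivity|]. rewrite <- IH. unfold f0. ring.
Qed.

Lemma in_cantor_1 : in_cantor 1.
Proof.
  intro n. exists (repeat true n). split; [apply repeat_length|]. exists 1. split; [lra|].
  induction n as [|n IH]; simpl; [reflexivity|]. rewrite <- IH. unfold f1. ring.
Qed.

Lemma in_cantor_scale x : in_cantor x -> in_cantor (r * x).
Proof.
  intros H [|n].
  - exists nil. split; [reflexivity|]. exists (r * x).
    pose proof (C_level_unit 0 x (H 0%nat)). split; [nra|reflexivity].
  - destruct (H n) as [w [Hl [y [Hy ->]]]]. exists (false :: w).
    split; [simpl; lia|]. exists y. split; [assumption|reflexivity].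
Qed.

Lemma in_cantor_scale_pow x n : in_cantor x -> in_cantor (r ^ n * x).
Proof.
  intro H. induction n as [|n IH]; simpl; [now rewrite Rmult_1_l|].
  rewrite Rmult_assoc. now apply in_cantor_scale.
Qed.

End Cylinders.

Section PowerSums.

Variable r : R.
Hypothesis r_bounds : 0 < r < 1/2.
Variable e : nat.

Let r_unit : 0 < r < 1.
Proof. lra. Qed.

Definition low_sum (W : nat -> list bool) (p : nat) : R :=
  ssum (fun i => left_point r (W i) ^ S e) p.

Definition high_sum (W : nat -> list bool) (p : nat) : R :=
  ssum (fun i => (left_point r (W i) + r ^ length (W i)) ^ S e) p.

Lemma high_sub_low W p :
  high_sum W p - low_sum W p = ssum (fun i => (left_point r (W i) + r ^ length (W i)) ^ S e - left_point r (W i) ^ S e) p.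
Proof. apply ssum_sub. Qed.

Lemma cylinder_image_width_ge lo w N : 0 <= lo <= left_point r w -> (length w <= S N)%nat ->
  INR (S e) * lo ^ e * r ^ S N <= (left_point r w + r ^ length w) ^ S e - left_point r w ^ S e.
Proof.
  intros Hlo Hl.
  pose proof (pow_sub_ge e lo (left_point r w + r ^ length w) (left_point r w) Hlo) as H.
  pose proof (pow_le r (length w) ltac:(lra)).
  pose proof (pow_le_pow_of_le1 r (length w) (S N) ltac:(lra) Hl).
  assert (0 <= INR (S e) * lo ^ e) by (apply Rmult_le_pos; [apply pos_INR|apply pow_le; lra]).
  replace (left_point r w + r ^ length w - left_point r w) with (r ^ length w) in H by ring. nra.
Qed.

(* Refining cylinder [W j] to either child loses at most its own image width plus the image of the
   middle gap; the gap image is small enough to be absorbed by the other [p0] images. *)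
Lemma refine_spread W p0 j N lo :
  1 - 2 * r <= INR p0 * lo ^ e * r -> 0 <= lo -> (j < S p0)%nat -> length (W j) = N ->
  (forall i, (i < S p0)%nat -> lo <= left_point r (W i) /\ (length (W i) <= S N)%nat) ->
  let c := left_point r (W j) in
  (c + r ^ N) ^ S e - c ^ S e + ((c + (1 - r) * r ^ N) ^ S e - (c + r * r ^ N) ^ S e)
    <= high_sum W (S p0) - low_sum W (S p0).
Proof.
  intros Hgap Hlo Hj HN HW c. set (h := r ^ N).
  assert (Hh : 0 < h) by (apply pow_lt; lra).
  assert (Hc : 0 <= c /\ c + h <= 1) by (unfold c, h; rewrite <- HN; apply left_point_bounds; lra).
  set (mu := INR (S e) * lo ^ e * r ^ S N).
  assert (Hmu : forall i, (i < S p0)%nat ->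
                mu <= (left_point r (W i) + r ^ length (W i)) ^ S e - left_point r (W i) ^ S e)
    by (intros i Hi; destruct (HW i Hi); apply cylinder_image_width_ge; auto).
  pose proof (ssum_ge_term _ p0 j mu Hj Hmu) as Hother.
  cbv beta in Hother. rewrite HN in Hother. fold c h in Hother.
  assert (Hgap_image : (c + (1 - r) * h) ^ S e - (c + r * h) ^ S e <= INR (S e) * ((1 - 2 * r) * h)).
  { replace ((1 - 2 * r) * h) with (c + (1 - r) * h - (c + r * h)) by ring.
    apply pow_sub_le; nra. }
  assert (INR (S e) * ((1 - 2 * r) * h) <= INR p0 * mu).
  { unfold mu. simpl (r ^ S N). fold h. pose proof (pos_INR (S e)).
    assert (INR (S e) * h * (1 - 2 * r) <= INR (S e) * h * (INR p0 * lo ^ e * r))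
      by (apply Rmult_le_compat_l; nra).
    nra. }
  rewrite high_sub_low. lra.
Qed.

Lemma refine_one W p0 j N lo y :
  1 - 2 * r <= INR p0 * lo ^ e * r -> 0 <= lo -> (j < S p0)%nat -> length (W j) = N ->
  (forall i, (i < S p0)%nat -> lo <= left_point r (W i) /\ (length (W i) <= S N)%nat) ->
  low_sum W (S p0) <= y <= high_sum W (S p0) ->
  exists b, low_sum (upd W j (W j ++ b :: nil)) (S p0) <= y <= high_sum (upd W j (W j ++ b :: nil)) (S p0).
Proof.
  intros Hgap Hlo Hj HN HW Hy.
  pose proof (refine_spread W p0 j N lo Hgap Hlo Hj HN HW) as Hspread.
  set (c := left_point r (W j)) in *. set (h := r ^ N) in *.
  assert (Hsnoc : forall b, left_point r (W j ++ b :: nil) = c + h * (if b then 1 - r else 0)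
                            /\ r ^ length (W j ++ b :: nil) = r * h).
  { intro b. split; [unfold c, h; rewrite left_point_snoc, HN; reflexivity|].
    rewrite length_app, HN, Nat.add_comm. reflexivity. }
  assert (Hupd : forall b (F : list bool -> R),
            ssum (fun i => F (upd W j (W j ++ b :: nil) i)) (S p0)
            = ssum (fun i => F (W i)) (S p0) - F (W j) + F (W j ++ b :: nil))
    by (intros; apply ssum_upd; exact Hj).
  destruct (Rle_or_lt y (high_sum W (S p0) - (c + h) ^ S e + (c + r * h) ^ S e)) as [Hle|Hlt].
  - exists false. unfold low_sum, high_sum.
    rewrite (Hupd false (fun w => left_point r w ^ S e)),
            (Hupd false (fun w => (left_point r w + r ^ length w) ^ S e)).
    destruct (Hsnoc false) as [-> ->]. fold c.
    replace (c + h * 0) with c by ring. rewrite HN; fold h. unfold high_sum, low_sum in *. lra.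
  - exists true. unfold low_sum, high_sum.
    rewrite (Hupd true (fun w => left_point r w ^ S e)),
            (Hupd true (fun w => (left_point r w + r ^ length w) ^ S e)).
    destruct (Hsnoc true) as [-> ->]. fold c h.
    replace (c + h * (1 - r) + r * h) with (c + h) by ring.
    replace (c + h * (1 - r)) with (c + (1 - r) * h) by ring.
    rewrite HN; fold h. unfold high_sum, low_sum in *. lra.
Qed.

Lemma refine_round W p0 N lo y :
  1 - 2 * r <= INR p0 * lo ^ e * r -> 0 <= lo ->
  (forall i, (i < S p0)%nat -> length (W i) = N /\ lo <= left_point r (W i)) ->
  low_sum W (S p0) <= y <= high_sum W (S p0) ->
  exists W', (forall i, (i < S p0)%nat -> exists b, W' i = W i ++ b :: nil) /\
             low_sum W' (S p0) <= y <= high_sum W' (S p0).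
Proof.
  intros Hgap Hlo HW Hy.
  assert (Hpartial : forall j, (j <= S p0)%nat -> exists V,
            (forall i, (i < S p0)%nat ->
               ((i < j)%nat -> exists b, V i = W i ++ b :: nil) /\ ((j <= i)%nat -> V i = W i)) /\
            low_sum V (S p0) <= y <= high_sum V (S p0)).
  { induction j as [|j IH]; intros Hj.
    - exists W. split; [intros i _; split; [lia|auto]|exact Hy].
    - destruct (IH ltac:(lia)) as [V [HV HVy]].
      assert (HVj : V j = W j) by (apply (HV j); lia).
      destruct (HW j ltac:(lia)) as [HlenJ _].
      destruct (refine_one V p0 j N lo y Hgap Hlo ltac:(lia)) as [b Hb]; [congruence| |exact HVy|].
      { intros i Hi. destruct (HW i Hi) as [Hl Hlo'].
        destruct (Nat.lt_ge_cases i j) as [Hij|Hij].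
        - destruct (proj1 (HV i Hi) Hij) as [b Hb]. rewrite Hb.
          pose proof (left_point_app r r_unit (W i) (b :: nil)).
          rewrite length_app; simpl. split; [lra|lia].
        - rewrite (proj2 (HV i Hi) Hij). split; [lra|lia]. }
      exists (upd V j (V j ++ b :: nil)). split; [|exact Hb].
      intros i Hi. unfold upd. destruct (Nat.eqb_spec i j) as [->|Hne].
      + split; [intros; exists b; now rewrite HVj|lia].
      + split; intros; apply HV; lia. }
  destruct (Hpartial (S p0) (Nat.le_refl _)) as [V [HV HVy]].
  exists V. split; [|exact HVy]. intros i Hi. apply (HV i Hi). exact Hi.
Qed.

Lemma pow_sum_squeeze (g : nat -> nat -> list bool) (x : nat -> R) p y :
  (forall n, low_sum (g n) p <= y <= high_sum (g n) p) ->
  (forall i n, (i < p)%nat -> (n <= length (g n i))%nat /\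
     left_point r (g n i) <= x i <= left_point r (g n i) + r ^ length (g n i)) ->
  y = ssum (fun i => x i ^ S e) p.
Proof.
  intros Hy Hx. apply Rminus_diag_uniq, (eq_of_geometric_bound _ (INR p * INR (S e)) r ltac:(lra)).
  intro n.
  assert (Hsq : low_sum (g n) p <= ssum (fun i => x i ^ S e) p <= high_sum (g n) p).
  { split; apply ssum_le; intros i Hi; apply pow_incr; destruct (Hx i n Hi);
      pose proof (left_point_bounds r r_unit (g n i)); lra. }
  assert (Hwidth : high_sum (g n) p - low_sum (g n) p <= INR p * INR (S e) * r ^ n).
  { rewrite high_sub_low, Rmult_assoc, <- ssum_const. apply ssum_le. intros i Hi.
    destruct (Hx i n Hi) as [Hl _]. pose proof (left_point_bounds r r_unit (g n i)).
    pose proof (pow_le r (length (g n i)) ltac:(lra)).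
    eapply Rle_trans; [apply pow_sub_le; lra|].
    replace (left_point r (g n i) + r ^ length (g n i) - left_point r (g n i)) with (r ^ length (g n i)) by ring.
    apply Rmult_le_compat_l; [apply pos_INR|]. apply pow_le_pow_of_le1; [lra|exact Hl]. }
  specialize (Hy n). unfold Rabs. destruct (Rcase_abs (y - ssum (fun i => x i ^ S e) p)); lra.
Qed.

Lemma cylinder_pow_sum_cover w0 p0 y :
  1 - 2 * r <= INR p0 * left_point r w0 ^ e * r ->
  INR (S p0) * left_point r w0 ^ S e <= y <= INR (S p0) * (left_point r w0 + r ^ length w0) ^ S e ->
  exists u : nat -> R, (forall i, in_cantor r (u i)) /\ (forall i, (S p0 <= i)%nat -> u i = 0) /\
    y = ssum (fun i => u i ^ S e) (S p0).
Proof.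
  intros Hgap Hy. set (p := S p0). set (lo := left_point r w0).
  assert (Hlo : 0 <= lo) by apply (left_point_bounds r r_unit).
  set (Inv := fun W => exists N, (forall i, (i < p)%nat -> length (W i) = N /\ lo <= left_point r (W i)) /\
                                 low_sum W p <= y <= high_sum W p).
  assert (Hinv0 : Inv (fun _ => w0)).
  { exists (length w0). split; [intros; split; lra || reflexivity|].
    unfold low_sum, high_sum. rewrite !ssum_const. exact Hy. }
  assert (Hstep : forall V : {W | Inv W}, exists V' : {W | Inv W},
            forall i, (i < p)%nat -> exists b, proj1_sig V' i = proj1_sig V i ++ b :: nil).
  { intros [W [N [HW HWy]]].
    destruct (refine_round W p0 N lo y Hgap Hlo HW HWy) as [W' [HW' HW'y]].
    assert (HinvW' : Inv W').
    { exists (S N). split; [|exact HW'y]. intros i Hi. destruct (HW' i Hi) as [b ->].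
      destruct (HW i Hi) as [Hl Hlo']. pose proof (left_point_app r r_unit (W i) (b :: nil)).
      rewrite length_app, Hl. simpl. split; [lia|lra]. }
    exists (exist _ W' HinvW'). exact HW'. }
  destruct (functional_choice_imp_functional_dependent_choice choice _ Hstep (exist _ _ Hinv0))
    as [f [_ Hf]].
  set (g := fun n => proj1_sig (f n)).
  assert (Hpoint : forall i, exists x, (i < p)%nat -> forall n, (n <= length (g n i))%nat /\
                     left_point r (g n i) <= x <= left_point r (g n i) + r ^ length (g n i)).
  { intro i. destruct (Nat.lt_ge_cases i p) as [Hi|Hi]; [|exists 0; lia].
    destruct (snoc_chain_point r r_unit (fun n => g n i)) as [x Hx];
      [intro n; exact (Hf n i Hi)|].
    exists x. intros _. exact Hx. }
  destruct (choice _ Hpoint) as [x Hx].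
  exists (fun i => if Nat.ltb i p then x i else 0). split; [|split].
  - intro i. destruct (Nat.ltb_spec i p) as [Hi|Hi]; [|apply in_cantor_0].
    apply (in_cantor_of_nested r r_unit _ (fun n => g n i)). exact (Hx i Hi).
  - intros i Hi. destruct (Nat.ltb_spec i p); [lia|reflexivity].
  - rewrite (ssum_ext _ (fun i => x i ^ S e))
      by (intros i Hi; destruct (Nat.ltb_spec i p); [reflexivity|lia]).
    apply (pow_sum_squeeze g); [|intros i n Hi; apply (Hx i Hi)].
    intro n. destruct (proj2_sig (f n)) as [N [_ Hyn]]. exact Hyn.
Qed.

Definition cantor_pow_sum (m : nat) (y : R) : Prop :=
  exists u : nat -> R, (forall i, in_cantor r (u i)) /\ y = ssum (fun i => u i ^ S e) m.

(* Self-similarity: [r * C] is contained in [C], so only the top band needs to be covered. *)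
Lemma cantor_pow_sum_rescale m :
  (forall Y, r ^ S e * INR m < Y <= INR m -> cantor_pow_sum m Y) ->
  forall y, 0 <= y <= INR m -> cantor_pow_sum m y.
Proof.
  intros Htop y Hy.
  assert (Hre : 0 < r ^ S e < 1) by (split; [apply pow_lt|apply pow_lt_1_compat]; lra || lia).
  destruct (Req_dec y 0) as [->|Hy0].
  { exists (fun _ => 0). split; [intro; apply in_cantor_0|].
    rewrite (ssum_ext _ (fun _ => 0)) by (intros; simpl; ring). rewrite ssum_const. ring. }
  destruct (geometric_scale_exists (r ^ S e) (INR m) y Hre ltac:(lra)) as [n [Hn1 Hn2]].
  set (q := (r ^ S e) ^ n) in *.
  assert (Hq : 0 < q) by (apply pow_lt; lra).
  destruct (Htop (y / q)) as [u [Hu Hsum]].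
  { change ((r ^ S e) ^ S n) with (r ^ S e * q) in Hn1. assert (Hyq : y / q * q = y) by (field; lra).
    split; [apply (Rmult_lt_reg_r q)|apply (Rmult_le_reg_r q)]; auto; rewrite Hyq; lra. }
  exists (fun i => r ^ n * u i). split; [intro i; apply in_cantor_scale_pow; auto|].
  rewrite (ssum_ext _ (fun i => q * u i ^ S e)).
  - rewrite ssum_scale, <- Hsum. field. lra.
  - intros i _. unfold q. rewrite Rpow_mult_distr, <- !pow_mult, Nat.mul_comm. reflexivity.
Qed.

Lemma cantor_pow_sum_top_band P0 m :
  1 - 2 * r <= INR P0 * (1 - r) ^ e * r ->
  INR (S P0) * (1 - r) ^ S e <= r ^ S e * INR m ->
  forall Y, r ^ S e * INR m < Y <= INR m -> cantor_pow_sum m Y.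
Proof.
  intros Hgap HP Y HY.
  set (c := (1 - r) ^ S e) in *.
  assert (Hc : 0 < c <= 1 - r).
  { unfold c. split; [apply pow_lt; lra|]. simpl.
    pose proof (pow_le_one (1 - r) e ltac:(lra)). pose proof (pow_le (1 - r) e ltac:(lra)). nra. }
  assert (Hre : r ^ S e < c) by (apply pow_lt_pow_base; lra).
  assert (HrP : 1 - r <= INR (S P0) * r).
  { rewrite S_INR. pose proof (pow_le_one (1 - r) e ltac:(lra)). pose proof (pos_INR P0).
    assert (INR P0 * (1 - r) ^ e * r <= INR P0 * r) by (apply Rmult_le_compat_r; nra). lra. }
  assert (HPm : (S P0 <= m)%nat).
  { apply INR_le. pose proof (pos_INR m). nra. }
  assert (Hband_step : forall q, (S P0 <= q)%nat -> (INR q + 1) * c <= INR q).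
  { intros q Hq. apply le_INR in Hq. pose proof (pos_INR q).
    assert ((INR q + 1) * c <= (INR q + 1) * (1 - r)) by (apply Rmult_le_compat_l; lra). nra. }
  destruct (nat_band_cover c Y (S P0) m Hband_step ltac:(nra) HPm) as [[|p0] [Hp HpY]]; [lia|].
  assert (Hleft : left_point r (true :: nil) = 1 - r) by (unfold left_point; simpl; unfold f1; ring).
  destruct (cylinder_pow_sum_cover (true :: nil) p0 Y) as [u [Hu [Hzero Hsum]]].
  - rewrite Hleft. pose proof (le_INR P0 p0 ltac:(lia)). pose proof (pow_le (1 - r) e ltac:(lra)).
    assert (INR P0 * (1 - r) ^ e * r <= INR p0 * (1 - r) ^ e * r)
      by (apply Rmult_le_compat_r; [lra|apply Rmult_le_compat_r; lra]). lra.
  - rewrite Hleft. simpl length. rewrite pow_1. replace (1 - r + r) with 1 by ring. rewrite pow1. fold c. lra.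
  - exists u. split; [exact Hu|]. rewrite Hsum. symmetry. apply ssum_zero_tail; [lia|].
    intros i Hi. rewrite Hzero by lia. simpl. ring.
Qed.

End PowerSums.

Lemma budget_bound_of_square t T M : 1 < t -> t <= T -> 2 * t * T ^ 2 <= M -> t ^ 2 * T ^ 2 <= M ->
  2 * t * T + t * (t - 1) * T ^ 2 <= M.
Proof.
  intros Ht HT H1 H2. destruct (Rle_or_lt 2 T) as [HT2|HT2].
  - assert (0 <= t * T * (T - 2)) by (apply Rmult_le_pos; nra). nra.
  - (* here [t < 2], so [T (3 - t) >= t (3 - t) >= 2] *)
    assert (H3 : 2 <= T * (3 - t)) by nra.
    assert (0 <= t * T * (T * (3 - t) - 2)) by (apply Rmult_le_pos; nra). nra.
Qed.

Lemma golden_poly_bound t : 1 <= t -> t * t <= t + 1 ->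
  (2 * t ^ 3 + (t * t - t) * (t + 1) ^ 2) ^ 2 <= 2 * (t + 1) ^ 5.
Proof.
  intros H1 H2.
  assert (E : 2 * (t + 1) ^ 5 - (2 * t ^ 3 + (t * t - t) * (t + 1) ^ 2) ^ 2
              = (-1 + 6 * t + 12 * t ^ 2 + 12 * t ^ 3 + 15 * t ^ 4 + 7 * t ^ 5 + t ^ 6)
                * (t + 1 - t * t) + 5 * t + 3) by ring.
  assert (0 <= -1 + 6 * t + 12 * t ^ 2 + 12 * t ^ 3 + 15 * t ^ 4 + 7 * t ^ 5 + t ^ 6).
  { assert (1 <= t ^ 2) by nra.
    pose proof (pow_le t 3 ltac:(lra)). pose proof (pow_le t 4 ltac:(lra)).
    pose proof (pow_le t 5 ltac:(lra)). pose proof (pow_le t 6 ltac:(lra)). lra. }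
  nra.
Qed.

(* The two lower bounds on [M] multiply to [2 (t + 1)^(2e+1)]; their geometric mean suffices. *)
Lemma budget_bound_below_golden t M e : 1 < t -> t * t <= t + 1 -> (2 <= e)%nat ->
  2 * t ^ (2 * e + 1) <= M -> ((t + 1) / t) ^ (2 * e + 1) <= M ->
  2 * t ^ S e + t * (t - 1) * (t + 1) ^ e <= M.
Proof.
  intros Ht Hgold He H1 H2.
  set (U := (t + 1) ^ e). set (rho := t / (t + 1)).
  assert (HU : 0 < U) by (apply pow_lt; lra).
  assert (Hrho : 0 <= rho <= 1).
  { unfold rho. split; [apply Rlt_le, Rdiv_lt_0_compat; lra|].
    apply (Rmult_le_reg_r (t + 1)); [lra|]. unfold Rdiv. rewrite Rmult_assoc, Rinv_l; lra. }
  set (f := 2 * t * rho ^ 2 + t * (t - 1)).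
  assert (Hf0 : 0 <= f) by (unfold f; pose proof (pow_le rho 2 ltac:(lra)); nra).
  assert (Hlhs : 2 * t ^ S e + t * (t - 1) * U <= U * f).
  { assert (Ete : t ^ e = rho ^ e * U) by (unfold rho, U; rewrite <- Rpow_mult_distr; f_equal; field; lra).
    assert (rho ^ e <= rho ^ 2) by (apply pow_le_pow_of_le1; assumption).
    assert (0 <= 2 * t * U * (rho ^ 2 - rho ^ e)) by (apply Rmult_le_pos; nra).
    change (t ^ S e) with (t * t ^ e). rewrite Ete. unfold f. nra. }
  assert (Hf : f * f <= 2 * (t + 1)).
  { assert (Ef : f * (t + 1) ^ 2 = 2 * t ^ 3 + (t * t - t) * (t + 1) ^ 2) by (unfold f, rho; field; lra).
    pose proof (golden_poly_bound t ltac:(lra) Hgold) as P. rewrite <- Ef in P.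
    assert (0 < (t + 1) ^ 4) by (apply pow_lt; lra).
    apply (Rmult_le_reg_r ((t + 1) ^ 4)); [assumption|]. nra. }
  assert (HM : 2 * (t + 1) * (U * U) <= M * M).
  { assert (Eprod : t ^ (2 * e + 1) * ((t + 1) / t) ^ (2 * e + 1) = (t + 1) * (U * U)).
    { rewrite <- Rpow_mult_distr. replace (t * ((t + 1) / t)) with (t + 1) by (field; lra).
      unfold U. rewrite <- pow_add. replace (2 * e + 1)%nat with (S (e + e)) by lia. reflexivity. }
    pose proof (pow_le t (2 * e + 1) ltac:(lra)).
    pose proof (pow_le ((t + 1) / t) (2 * e + 1) ltac:(apply Rlt_le, Rdiv_lt_0_compat; lra)).
    nra. }
  assert (0 <= M) by (pose proof (pow_le t (2 * e + 1) ltac:(lra)); lra).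
  assert (U * f <= M) by (apply Rsqr_incr_0_var; unfold Rsqr; nra).
  fold U. lra.
Qed.

Lemma budget_bound t M e s : 1 < t -> (1 <= e)%nat -> (2 * S e <= s)%nat ->
  2 * t ^ (s - 1) <= M -> t ^ s <= M -> ((t + 1) / t) ^ (s - 1) <= M ->
  2 * t ^ S e + t * (t - 1) * (t + 1) ^ e <= M.
Proof.
  intros Ht He Hs H1 H2 H3.
  assert (H1' : 2 * t ^ (2 * e + 1) <= M).
  { pose proof (Rle_pow t (2 * e + 1) (s - 1) ltac:(lra) ltac:(lia)). lra. }
  assert (H2' : t ^ (2 * e + 2) <= M).
  { pose proof (Rle_pow t (2 * e + 2) s ltac:(lra) ltac:(lia)). lra. }
  destruct (Nat.eq_dec e 1) as [->|He1].
  { simpl in H1' |- *. assert (0 <= t * ((t - 1) * (t - 1))) by (apply Rmult_le_pos; nra). nra. }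
  destruct (Rle_or_lt (t + 1) (t * t)) as [Hgold|Hgold].
  - set (T := t ^ e).
    assert (HT : t <= T) by (unfold T; rewrite <- (pow_1 t) at 1; apply Rle_pow; lra || lia).
    assert (HU : (t + 1) ^ e <= T ^ 2).
    { unfold T. rewrite <- pow_mult, Nat.mul_comm, pow_mult. apply pow_incr. simpl. lra. }
    assert (Et1 : t ^ (2 * e + 1) = t * T ^ 2)
      by (unfold T; rewrite <- pow_mult; replace (2 * e + 1)%nat with (S (e * 2)) by lia; reflexivity).
    assert (Et2 : t ^ (2 * e + 2) = t ^ 2 * T ^ 2)
      by (unfold T; rewrite <- pow_mult, <- pow_add; f_equal; lia).
    pose proof (budget_bound_of_square t T M Ht HT ltac:(lra) ltac:(lra)).
    assert (t * (t - 1) * (t + 1) ^ e <= t * (t - 1) * T ^ 2) by (apply Rmult_le_compat_l; nra).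
    change (t ^ S e) with (t * T). lra.
  - apply budget_bound_below_golden; try lra; try lia.
    assert (1 <= (t + 1) / t).
    { apply (Rmult_le_reg_r t); [lra|]. unfold Rdiv. rewrite Rmult_assoc, Rinv_l; lra. }
    pose proof (Rle_pow ((t + 1) / t) (2 * e + 1) (s - 1) ltac:(lra) ltac:(lia)). lra.
Qed.

Lemma cantor_linear_sum r m y : 0 < r < 1/2 -> (1 <= m)%nat -> 1 - 2 * r <= (INR m - 1) * r ->
  0 <= y <= INR m -> cantor_pow_sum r 0 m y.
Proof.
  intros Hr Hm Hgap Hy. destruct m as [|m0]; [lia|].
  destruct (cylinder_pow_sum_cover r Hr 0 nil m0 y) as [u [Hu [_ Hsum]]].
  - rewrite S_INR in Hgap. simpl. lra.
  - unfold left_point. cbn [f_word length pow]. lra.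
  - exists u. split; assumption.
Qed.

Lemma cantor_pow_sum_onto r e s m : 0 < r < 1/2 -> (2 * S e <= s)%nat ->
  2 * ((1 - r) / r) ^ (s - 1) <= INR m -> ((1 - r) / r) ^ s <= INR m ->
  (1 / (1 - r)) ^ (s - 1) <= INR m ->
  forall y, 0 <= y <= INR m -> cantor_pow_sum r e m y.
Proof.
  intros Hr Hs H1 H2 H3 y Hy.
  set (t := (1 - r) / r) in *.
  assert (Htr : t * r = 1 - r) by (unfold t; field; lra).
  assert (Ht : 1 < t) by nra.
  assert (Hm : t <= INR m) by (pose proof (Rle_pow t 1 s ltac:(lra) ltac:(lia)); rewrite pow_1 in *; lra).
  destruct e as [|e].
  { apply cantor_linear_sum; [assumption| |nra|assumption].
    apply INR_le. simpl. lra. }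
  set (A := (1 - 2 * r) / ((1 - r) ^ S e * r)).
  assert (Hpe : 0 < (1 - r) ^ S e) by (apply pow_lt; lra).
  assert (HA : A * ((1 - r) ^ S e * r) = 1 - 2 * r) by (unfold A; field; lra).
  destruct (exists_nat_ceil A) as [P0 HP0]; [apply Rlt_le, Rdiv_lt_0_compat; nra|].
  apply (cantor_pow_sum_rescale r Hr); [|exact Hy].
  apply (cantor_pow_sum_top_band r Hr (S e) P0).
  - rewrite Rmult_assoc. assert (0 < (1 - r) ^ S e * r) by nra. nra.
  - pose proof (budget_bound t (INR m) (S e) s Ht ltac:(lia) Hs H1 H2) as Hbudget.
    replace ((t + 1) / t) with (1 / (1 - r)) in Hbudget by (unfold t; field; lra).
    specialize (Hbudget H3).
    assert (Hre : 0 < r ^ S (S e)) by (apply pow_lt; lra).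
    apply (Rmult_le_compat_l (r ^ S (S e))) in Hbudget; [|lra].
    (* [r t = 1 - r] and [r (t + 1) = 1] turn the budget into [(A + 2) (1 - r)^(e+2) <= r^(e+2) m]. *)
    assert (Escale : r ^ S (S e) * (2 * t ^ S (S e) + t * (t - 1) * (t + 1) ^ S e)
                     = 2 * (1 - r) ^ S (S e) + A * (1 - r) ^ S (S e)).
    { rewrite Rmult_plus_distr_l.
      replace (r ^ S (S e) * (2 * t ^ S (S e))) with (2 * (t * r) ^ S (S e)) by (rewrite Rpow_mult_distr; ring).
      replace (r ^ S (S e) * (t * (t - 1) * (t + 1) ^ S e)) with (t * (t - 1) * r * ((t + 1) * r) ^ S e)
        by (rewrite Rpow_mult_distr; simpl; ring).
      replace ((t + 1) * r) with 1 by lra. rewrite pow1, Htr.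
      unfold A. change ((1 - r) ^ S (S e)) with ((1 - r) * (1 - r) ^ S e).
      unfold t. field. split; lra. }
    rewrite Escale in Hbudget. rewrite S_INR.
    assert ((INR P0 + 1) * (1 - r) ^ S (S e) <= (A + 2) * (1 - r) ^ S (S e))
      by (apply Rmult_le_compat_r; [apply pow_le|]; lra).
    lra.
Qed.

Lemma ratio_bounds alpha : 1 < alpha -> 0 < ratio alpha < 1/2.
Proof.
  intro Ha. unfold ratio. assert (0 < 1 / alpha < 1); [|lra].
  split; [apply Rdiv_lt_0_compat; lra|].
  apply (Rmult_lt_reg_r alpha); [lra|]. unfold Rdiv. rewrite Rmult_assoc, Rinv_l; lra.
Qed.

Lemma Rceil_ge x : x <= IZR (Rceil x).
Proof.
  unfold Rceil, Rfloor. destruct (archimed (- x)) as [H1 H2].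
  rewrite opp_IZR, minus_IZR. simpl (IZR 1). lra.
Qed.

Lemma powerRZ_floor_neg_logb_bounds r z : 0 < r < 1 -> 1 <= z ->
  0 < powerRZ r (Rfloor (- logb r z) + 1) <= 1.
Proof.
  intros Hr Hz. split; [apply powerRZ_lt; lra|].
  assert (Hlog : 0 <= - logb r z).
  { unfold logb. assert (ln r < 0) by (rewrite <- ln_1; apply ln_increasing; lra).
    assert (0 <= ln z) by (destruct (Req_dec z 1) as [->|]; [rewrite ln_1; lra|left; rewrite <- ln_1; apply ln_increasing; lra]).
    unfold Rdiv. assert (/ ln r < 0) by (apply Rinv_lt_0_compat; lra). nra. }
  assert (Hfl : (0 <= Rfloor (- logb r z))%Z).
  { unfold Rfloor. destruct (archimed (- logb r z)) as [H1 _].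
    assert (0 < up (- logb r z))%Z by (apply lt_IZR; lra). lia. }
  rewrite <- (Z2Nat.id (Rfloor (- logb r z) + 1)) by lia. rewrite <- pow_powerRZ.
  apply pow_le_one. lra.
Qed.

Lemma ceil_coefficient_ge_4 r rho s : 0 < r < 1 -> 0 < rho <= 1 -> (2 <= s)%nat ->
  4 <= IZR (Rceil (2 * ((1 - r + rho) ^ (s - 2) * ((1 - r + rho) + (INR s - 1)))
                     / ((1 - r) ^ (s - 2) * ((1 - r) + (INR s - 1) * (1 - rho))) + 2)).
Proof.
  intros Hr Hrho Hs.
  assert (Hs1 : 1 <= INR s - 1) by (pose proof (le_INR 2 s Hs); simpl in *; lra).
  set (num := (1 - r + rho) ^ (s - 2) * ((1 - r + rho) + (INR s - 1))).
  set (den := (1 - r) ^ (s - 2) * ((1 - r) + (INR s - 1) * (1 - rho))).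
  assert (Hpow : 0 < (1 - r) ^ (s - 2) <= (1 - r + rho) ^ (s - 2))
    by (split; [apply pow_lt|apply pow_incr]; lra).
  assert (Hden : 0 < den) by (unfold den; apply Rmult_lt_0_compat; nra).
  assert (den <= num) by (unfold num, den; apply Rmult_le_compat; nra).
  assert (2 <= 2 * num / den).
  { apply (Rmult_le_reg_r den); [assumption|]. unfold Rdiv. rewrite Rmult_assoc, Rinv_l; lra. }
  pose proof (Rceil_ge (2 * num / den + 2)). lra.
Qed.

Lemma pair_sum_bounds x a b m : (forall i, (i < 2 * m)%nat -> 0 <= x i <= 1) ->
  0 <= pair_sum x a b m <= INR m.
Proof.
  induction m as [|m IH]; intros H; [simpl; lra|].
  cbn [pair_sum]. rewrite S_INR.
  specialize (IH ltac:(intros; apply H; lia)).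
  destruct (H (2 * m)%nat ltac:(lia)), (H (2 * m + 1)%nat ltac:(lia)).
  pose proof (pow_le (x (2 * m)%nat) a ltac:(lra)). pose proof (pow_le_one (x (2 * m)%nat) a ltac:(lra)).
  pose proof (pow_le (x (2 * m + 1)%nat) b ltac:(lra)). pose proof (pow_le_one (x (2 * m + 1)%nat) b ltac:(lra)).
  nra.
Qed.

Lemma pair_sum_interleave u v a b m :
  pair_sum (fun i => if Nat.even i then u (Nat.div2 i) else v (Nat.div2 i)) a b m
  = ssum (fun i => u i ^ a * v i ^ b) m.
Proof.
  induction m as [|m IH]; [reflexivity|]. cbn [pair_sum ssum]. rewrite IH.
  rewrite Nat.even_even, Nat.even_odd, Nat.div2_double, Nat.div2_odd'. reflexivity.
Qed.

Lemma pair_sum_of_cantor_pow_sum r a b m y : (1 <= a)%nat -> (1 <= b)%nat ->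
  cantor_pow_sum r (a - 1) m y \/ cantor_pow_sum r (b - 1) m y ->
  exists x, (forall i, in_cantor r (x i)) /\ y = pair_sum x a b m.
Proof.
  intros Ha Hb [[u [Hu Hsum]]|[u [Hu Hsum]]].
  - exists (fun i => if Nat.even i then u (Nat.div2 i) else 1).
    split; [intro i; destruct (Nat.even i); [apply Hu|apply in_cantor_1]|].
    rewrite Hsum, (pair_sum_interleave u (fun _ => 1)). apply ssum_ext. intros i _.
    rewrite pow1, Rmult_1_r. f_equal. lia.
  - exists (fun i => if Nat.even i then 1 else u (Nat.div2 i)).
    split; [intro i; destruct (Nat.even i); [apply in_cantor_1|apply Hu]|].
    rewrite Hsum, (pair_sum_interleave (fun _ => 1) u). apply ssum_ext. intros i _.
    rewrite pow1, Rmult_1_l. f_equal. lia.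
Qed.

Theorem mainTheorem3 (alpha : R) (a b : nat) :
  1 < alpha -> (1 <= a)%nat -> (1 <= b)%nat ->
  let r := ratio alpha in
  let s := (a + b)%nat in
  let n' := (Rfloor (- logb r (INR s - 1)) + 1)%Z in
  let q := 1 - r + powerRZ r n' in
  forall k : nat, (0 < k)%nat -> Nat.Even k ->
    INR k >= IZR (Rceil (2 * (q ^ (s - 2) * (q + (INR s - 1)))
                           / ((1 - r) ^ (s - 2) * ((1 - r) + (INR s - 1) * (1 - powerRZ r n')))
                         + 2))
             * ((1 - r) / r) ^ (s - 1) ->
    INR k >= 2 * ((1 - r) / r) ^ s ->
    INR k >= 2 * (1 / (1 - r)) ^ (s - 1) + 2 ->
    forall y : R,
      (0 <= y <= INR k / 2) <->
      (exists x : nat -> R,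
          (forall i, (i < k)%nat -> Cantor alpha (x i)) /\
          y = pair_sum x a b (k / 2)).
Proof.
  intros Halpha Ha Hb r s n' q k _ [j ->] H1 H2 H3 y.
  pose proof (ratio_bounds alpha Halpha) as Hr. fold r in Hr.
  rewrite Nat.mul_comm, Nat.div_mul by lia. rewrite mult_INR in *. simpl (INR 2) in *.
  replace (INR j * (1 + 1) / 2) with (INR j) by field.
  split.
  - intros Hy.
    assert (Hs : (2 <= s)%nat) by lia.
    assert (Hs1 : 1 <= INR s - 1) by (pose proof (le_INR 2 s Hs); simpl in *; lra).
    pose proof (powerRZ_floor_neg_logb_bounds r (INR s - 1) ltac:(lra) Hs1) as Hrho. fold n' in Hrho.
    pose proof (ceil_coefficient_ge_4 r (powerRZ r n') s ltac:(lra) Hrho Hs) as Hcoef. fold q in Hcoef.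
    assert (Ht : 0 < ((1 - r) / r) ^ (s - 1)) by (apply pow_lt, Rdiv_lt_0_compat; lra).
    destruct (pair_sum_of_cantor_pow_sum r a b j y Ha Hb) as [x [Hx Hsum]].
    { destruct (Nat.le_ge_cases a b); [left|right];
        apply cantor_pow_sum_onto with (s := s); (lia || nra || assumption). }
    exists x. split; [intros i _ n _; apply Hx|exact Hsum].
  - intros [x [Hx ->]]. apply pair_sum_bounds. intros i Hi.
    exact (C_level_unit r ltac:(lra) 1 (x i) (Hx i ltac:(lia) 1%nat (Nat.le_refl 1))).
Qed.
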